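(* Let $H$ be a separable infinite-dimensional Hilbert space, let $\mathcal{I}$ be the set of all isometries on $H$ endowed with the strong operator topology, and let $\mathcal{U}\subset\mathcal{I}$ be the set of all unitary operators on $H$. Then $\mathcal{U}$ is residual in $\mathcal{I}$, i.e., $\mathcal{I}\setminus\mathcal{U}$ is of first category in $\mathcal{I}$.
   Context: A subset of a topological space is of first category if it is a countable union of nowhere dense sets, and residual if its complement is of first category. The space $\mathcal{I}$ with the strong operator topology is a complete metric space, e.g. with the metric $d(T,S)=\sum_{j\ge1}\frac{\|Tx_j-Sx_j\|}{2^j\|x_j\|}$ for a fixed dense sequence $\{x_j\}$ in $H\setminus\{0\}$. *)

From HB Require Import structures.
From mathcomp Require Import all_boot all_order all_algebra.
From mathcomp Require Import complex.
From mathcomp Require Import boolp classical_sets reals.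
Set Implicit Arguments. Unset Strict Implicit. Unset Printing Implicit Defensive.
Import Order.TTheory GRing.Theory Num.Theory ComplexField.
Local Open Scope ring_scope.
Local Open Scope classical_set_scope.

Section Hilbert.
Variables (R : realType) (H : lmodType R[i]) (ip : H -> H -> R[i]).

Definition hnorm (x : H) : R := Num.sqrt (complex.Re (ip x x)).

Definition inner_product : Prop :=
  [/\ forall (a : R[i]) (x y z : H), ip (a *: x + y) z = a * ip x z + ip y z,
      forall x y : H, ip y x = (ip x y)^*,
      forall x : H, 0 <= ip x x &
      forall x : H, ip x x = 0 -> x = 0].

Definition complete_space : Prop :=
  forall u : nat -> H,
    (forall e : R, 0 < e -> exists N, forall m n, (N <= m)%N -> (N <= n)%N ->
        hnorm (u m - u n) < e) ->
    exists l : H, forall e : R, 0 < e -> exists N, forall n, (N <= n)%N ->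
        hnorm (u n - l) < e.

Definition hilbert_space : Prop := inner_product /\ complete_space.

Definition separable_space : Prop :=
  exists d : nat -> H, forall (x : H) (e : R), 0 < e -> exists j, hnorm (x - d j) < e.

Definition infinite_dimensional : Prop :=
  forall n : nat, exists v : 'I_n -> H,
    forall c : 'I_n -> R[i], \sum_(i < n) c i *: v i = 0 -> forall i, c i = 0.

Definition linear_op (T : H -> H) : Prop :=
  forall (a : R[i]) (x y : H), T (a *: x + y) = a *: T x + T y.

Definition isometry (T : H -> H) : Prop :=
  linear_op T /\ forall x : H, hnorm (T x) = hnorm x.

(* unitary: U^* U = U U^* = I, where S is the adjoint of U *)
Definition unitary (T : H -> H) : Prop :=
  linear_op T /\ exists S : H -> H,
    [/\ forall x y : H, ip (T x) y = ip x (S y),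
        forall x, S (T x) = x & forall x, T (S x) = x].

Definition isometries : set (H -> H) := [set T | isometry T].
Definition unitaries : set (H -> H) := [set T | unitary T].

(* Relative topology on a set X of operators induced by the strong operator
   topology: basic neighbourhoods of T are {S | ||(S - T) x_i|| < e, i < n}. *)
Definition sot_open_in (X A : set (H -> H)) : Prop :=
  A `<=` X /\
  forall T, A T -> exists (n : nat) (x : 'I_n -> H) (e : R), 0 < e /\
    forall S, X S -> (forall i, hnorm (S (x i) - T (x i)) < e) -> A S.

Definition closure_in (X A : set (H -> H)) : set (H -> H) :=
  [set T | X T /\ forall U, sot_open_in X U -> U T -> exists S, U S /\ A S].

Definition interior_in (X B : set (H -> H)) : set (H -> H) :=
  [set T | exists U, [/\ sot_open_in X U, U `<=` B & U T]].

Definition nowhere_dense_in (X A : set (H -> H)) : Prop :=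
  A `<=` X /\ interior_in X (closure_in X A) = set0.

Definition first_category_in (X A : set (H -> H)) : Prop :=
  exists N : nat -> set (H -> H),
    (forall n, nowhere_dense_in X (N n)) /\ A = \bigcup_n N n.

Definition residual_in (X A : set (H -> H)) : Prop :=
  A `<=` X /\ first_category_in X (X `\` A).

End Hilbert.

(* A non-unitary isometry T has non-dense range, so some ball B(d_j, 1/(k+1))
   around a point of a fixed dense sequence misses the range of T.  It therefore
   suffices to show that the set N_(j,k) of isometries whose range misses this
   ball is nowhere dense.  Given an isometry T and finitely many vectors y_i,
   project d_j onto span {T y_i}: d_j = T q + r with r orthogonal to every T y_i.
   Choose u in the range of T with |u| = |r| and u orthogonal to r and to the T y_i
   (possible in infinite dimension), and compose T with the reflection exchanging
   u and r.  The result is an isometry agreeing with T on the y_i and with d_j in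
   its range, so every SOT-neighbourhood of T contains an isometry that is
   SOT-far from N_(j,k).  Conversely, an isometry with dense range is surjective
   since its range is complete, hence unitary. *)
From Pilot Require Import Defs.
From HB Require Import structures.
From mathcomp Require Import all_boot all_order all_algebra.
From mathcomp Require Import complex.
From mathcomp Require Import boolp classical_sets reals.
From mathcomp Require Import ring lra.
Import Order.TTheory GRing.Theory Num.Theory ComplexField.
Local Open Scope ring_scope.
Local Open Scope classical_set_scope.
Local Open Scope complex_scope.
Set Implicit Arguments. Unset Strict Implicit. Unset Printing Implicit Defensive.

Lemma exists_invSn_lt (R : realType) (e : R) : 0 < e -> exists N : nat, N.+1%:R^-1 < e.
Proof.
move=> e0; have e_ge0 : 0 <= e^-1 by rewrite invr_ge0 ltW.
have := archi_boundP e_ge0; set b := Num.bound _ => ltb; exists b.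
rewrite -[e]invrK ltf_pV2 ?posrE ?invr_gt0 ?ltr0Sn //.
by apply: (lt_le_trans ltb); rewrite ler_nat.
Qed.

Lemma invSn_gt0 (R : realType) (m : nat) : 0 < m.+1%:R^-1 :> R.
Proof. by rewrite invr_gt0 ltr0Sn. Qed.

Lemma lef_invSn (R : realType) (N m : nat) :
  (N <= m)%N -> m.+1%:R^-1 <= N.+1%:R^-1 :> R.
Proof. by move=> h; rewrite lef_pV2 ?posrE ?ltr0Sn // ler_nat ltnS. Qed.

Lemma conjC_real (R : realType) (t : R) : Num.conj t%:C = t%:C.
Proof. by rewrite /Num.conj /= oppr0. Qed.

Lemma ReMl_real (R : realType) (t : R) (w : R[i]) :
  complex.Re (t%:C * w) = t * complex.Re w.
Proof. by case: w => a b /=; rewrite mul0r subr0. Qed.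

Lemma ReD (R : realType) (w z : R[i]) : complex.Re (w + z) = complex.Re w + complex.Re z.
Proof. by case: w; case: z. Qed.

Lemma Re_conjC (R : realType) (w : R[i]) : complex.Re (Num.conj w) = complex.Re w.
Proof. by case: w. Qed.

(* A complex number is determined by the real parts of [w] and [i w]. *)
Lemma complex_eq_from_Re (R : realType) (w z : R[i]) :
  w + Num.conj w = z + Num.conj z ->
  'i * w + Num.conj 'i * Num.conj w = 'i * z + Num.conj 'i * Num.conj z -> w = z.
Proof.
case: w => a b; case: z => c d; rewrite /Num.conj /= => -[h1 h2] [h3 h4].
by congr (_ +i* _); lra.
Qed.

Section InnerProduct.
Variables (R : realType) (H : lmodType R[i]) (ip : H -> H -> R[i]).
Hypothesis hip : inner_product ip.


Lemma ipDZl a x y z : ip (a *: x + y) z = a * ip x z + ip y z.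
Proof. by case: hip. Qed.

Lemma ipC x y : ip y x = Num.conj (ip x y).
Proof. by case: hip => _ ->. Qed.

Lemma ip0l z : ip 0 z = 0.
Proof.
have := ipDZl 1 0 0 z; rewrite scale1r addr0 mul1r => h.
by apply/(addrI (ip 0 z)); rewrite addr0 -h.
Qed.

Lemma ipDl x y z : ip (x + y) z = ip x z + ip y z.
Proof. by rewrite -{1}[x]scale1r ipDZl mul1r. Qed.
Lemma ipZl a x z : ip (a *: x) z = a * ip x z.
Proof. by rewrite -[a *: x]addr0 ipDZl ip0l addr0. Qed.
Lemma ipNl x z : ip (- x) z = - ip x z.
Proof. by rewrite -scaleN1r ipZl mulN1r. Qed.
Lemma ipBl x y z : ip (x - y) z = ip x z - ip y z.
Proof. by rewrite ipDl ipNl. Qed.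
Lemma ip0r z : ip z 0 = 0.
Proof. by rewrite ipC ip0l; apply/eqP; rewrite conjC_eq0. Qed.
Lemma ipDr x y z : ip z (x + y) = ip z x + ip z y.
Proof. by rewrite ipC ipDl rmorphD /= -!ipC. Qed.
Lemma ipZr a x z : ip z (a *: x) = Num.conj a * ip z x.
Proof. by rewrite ipC ipZl rmorphM /= -ipC. Qed.
Lemma ipNr x z : ip z (- x) = - ip z x.
Proof. by rewrite ipC ipNl rmorphN /= -ipC. Qed.
Lemma ipBr x y z : ip z (x - y) = ip z x - ip z y.
Proof. by rewrite ipDr ipNr. Qed.

Lemma ip_suml n (c : 'I_n -> R[i]) (v : 'I_n -> H) z :
  ip (\sum_(i < n) c i *: v i) z = \sum_(i < n) c i * ip (v i) z.
Proof.
elim/big_rec2: _ => [|i y1 y2 _ IH]; first exact: ip0l.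
by rewrite ipDl ipZl -IH.
Qed.

Lemma ip_eq0 x : ip x x = 0 -> x = 0.
Proof. by case: hip => _ _ _; apply. Qed.

Lemma ipxx x : ip x x = (hnorm ip x ^+ 2)%:C.
Proof.
case: hip => _ _ /(_ x) + _; rewrite /hnorm; case: (ip x x) => a b.
by rewrite lecE /= => /andP[/eqP -> a_ge0]; rewrite sqr_sqrtr.
Qed.

Lemma hnorm_sqr x : hnorm ip x ^+ 2 = complex.Re (ip x x).
Proof. by rewrite ipxx. Qed.

Lemma hnorm_ge0 x : 0 <= hnorm ip x.
Proof. exact: sqrtr_ge0. Qed.

Lemma hnorm_eq0 x : hnorm ip x = 0 -> x = 0.
Proof. by move=> x0; apply: ip_eq0; rewrite ipxx x0 expr0n. Qed.

Lemma hnorm0 : hnorm ip 0 = 0.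
Proof. by rewrite /hnorm ip0l /= sqrtr0. Qed.

Lemma hnormN x : hnorm ip (- x) = hnorm ip x.
Proof. by rewrite /hnorm ipNl ipNr opprK. Qed.

Lemma hnorm_distC x y : hnorm ip (x - y) = hnorm ip (y - x).
Proof. by rewrite -hnormN opprB. Qed.

Lemma hnormZ_real (t : R) x : hnorm ip (t%:C *: x) = `|t| * hnorm ip x.
Proof.
rewrite /hnorm ipZl ipZr conjC_real !ReMl_real mulrA -expr2.
by rewrite sqrtrM ?sqr_ge0 // sqrtr_sqr.
Qed.

Lemma hnormD_sqr x y :
  hnorm ip (x + y) ^+ 2 = hnorm ip x ^+ 2 + 2 * complex.Re (ip x y) + hnorm ip y ^+ 2.
Proof. by rewrite !hnorm_sqr ipDl !ipDr [ip y x]ipC !ReD Re_conjC; ring. Qed.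

Lemma Re_ip_le x y : complex.Re (ip x y) <= hnorm ip x * hnorm ip y.
Proof.
have [/hnorm_eq0 ->|y_neq0] := eqVneq (hnorm ip y) 0; first by rewrite ip0r hnorm0 mulr0.
set b := complex.Re (ip x y).
have hx := hnorm_ge0 x; have hy := hnorm_ge0 y.
set q := hnorm ip y ^+ 2.
have q_gt0 : 0 < q by rewrite exprn_gt0 // lt_neqAle eq_sym y_neq0.
(* the discriminant of [t |-> |x + t y|^2] at its minimiser [t = -b/q] *)
have := sqr_ge0 (hnorm ip (x + (- b / q)%:C *: y)).
rewrite hnormD_sqr hnormZ_real ipZr conjC_real ReMl_real -/b exprMn.
rewrite real_normK ?num_real // -/q => disc.
have : 0 <= q * hnorm ip x ^+ 2 - b ^+ 2.
  have -> : q * hnorm ip x ^+ 2 - b ^+ 2 =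
    q * (hnorm ip x ^+ 2 + 2 * (- b / q * b) + (- b / q) ^+ 2 * q) by field; rewrite gt_eqF.
  by rewrite mulr_ge0 // ltW.
rewrite /q => disc'; have : 0 <= hnorm ip x * hnorm ip y by rewrite mulr_ge0.
nra.
Qed.

Lemma hnormD x y : hnorm ip (x + y) <= hnorm ip x + hnorm ip y.
Proof.
have := Re_ip_le x y; have := hnorm_ge0 x; have := hnorm_ge0 y.
have := hnorm_ge0 (x + y); have := hnormD_sqr x y.
nra.
Qed.

Lemma hnorm_distD x y z : hnorm ip (x - z) <= hnorm ip (x - y) + hnorm ip (y - z).
Proof. by have := hnormD (x - y) (y - z); rewrite addrA subrK. Qed.

Lemma hnorm_eq0_lt x : (forall e : R, 0 < e -> hnorm ip x < e) -> x = 0.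
Proof.
move=> small; apply: hnorm_eq0; have := hnorm_ge0 x.
by rewrite le_eqVlt => /orP[/eqP <- //|/small]; rewrite ltxx.
Qed.

(* [p] is the orthogonal projection of [x] onto span s: the second clause says
   that [p] lies in that span. *)
Lemma orth_projection (M : set H) : M 0 -> (forall a u v, M u -> M v -> M (a *: u + v)) ->
  forall s : seq H, (forall a, a \in s -> M a) -> forall x, exists p,
  [/\ M p, (forall w, (forall a, a \in s -> ip w a = 0) -> ip w p = 0)
    & forall a, a \in s -> ip (x - p) a = 0].
Proof.
move=> M0 Mlin; elim=> [|a0 s IH] Ms x.
  by exists 0; split => // w _; rewrite ip0r.
have Ms' a : a \in s -> M a by move=> h; apply: Ms; rewrite in_cons h orbT.
have [p [Mp p_span x_p]] := IH Ms' x.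
have [q [Mq q_span a0_q]] := IH Ms' a0.
have orth_s w : (forall a, a \in a0 :: s -> ip w a = 0) -> forall a, a \in s -> ip w a = 0.
  by move=> hw a ha; apply: hw; rewrite in_cons ha orbT.
set a' := a0 - q.
have Ma' : M a' by rewrite /a' -scaleN1r addrC; apply: Mlin => //; apply: Ms; exact: mem_head.
have [/ip_eq0 /eqP|a'_neq0] := eqVneq (ip a' a') 0.
  rewrite subr_eq0 => /eqP a0q; exists p; split => // [w /orth_s/p_span //|a].
  by rewrite in_cons => /orP[/eqP ->|]; [rewrite a0q; apply: q_span|apply: x_p].
(* Gram-Schmidt step: correct [p] along the component [a'] of [a0] orthogonal to s *)
set c := ip (x - p) a' / ip a' a'.
have x_pc a : a \in s -> ip (x - (p + c *: a')) a = 0.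
  by move=> ha; rewrite opprD addrA ipBl ipZl a0_q // mulr0 subr0 x_p.
exists (p + c *: a'); split.
- by rewrite addrC; apply: Mlin.
- move=> w hw; have ws := orth_s w hw.
  by rewrite ipDr ipZr /a' ipBr (q_span _ ws) (p_span _ ws) hw ?mem_head // subrr mulr0 addr0.
move=> a; rewrite in_cons => /orP[/eqP ->|]; last exact: x_pc.
rewrite -[a0](subrK q) -/a' ipDr (q_span _ x_pc) addr0.
by rewrite opprD addrA ipBl ipZl /c divfK // subrr.
Qed.

Section LinearOperator.
Variable T : H -> H.
Hypothesis linT : linear_op T.

Lemma linear_op0 : T 0 = 0.
Proof.
have := linT 1 0 0; rewrite scale1r addr0 scale1r => h.
by apply/(addrI (T 0)); rewrite addr0 -h.
Qed.
Lemma linear_opD x y : T (x + y) = T x + T y.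
Proof. by rewrite -{1}[x]scale1r linT scale1r. Qed.
Lemma linear_opZ a x : T (a *: x) = a *: T x.
Proof. by rewrite -[a *: x]addr0 linT linear_op0 addr0. Qed.
Lemma linear_opB x y : T (x - y) = T x - T y.
Proof. by rewrite linear_opD -scaleN1r linear_opZ scaleN1r. Qed.
Lemma linear_op_sum n (c : 'I_n -> R[i]) (v : 'I_n -> H) :
  T (\sum_(i < n) c i *: v i) = \sum_(i < n) c i *: T (v i).
Proof.
elim/big_rec2: _ => [|i y1 y2 _ IH]; first exact: linear_op0.
by rewrite linear_opD linear_opZ -IH.
Qed.

(* [size s + 1] independent vectors against [size s] linear constraints. *)
Lemma exists_image_orth : infinite_dimensional H -> forall s : seq H,
  exists z, z != 0 /\ forall b, b \in s -> ip (T z) b = 0.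
Proof.
move=> infH s; set m := size s; have [v v_free] := infH m.+1.
pose A : 'M[R[i]]_(m.+1, m) := \matrix_(l, i) ip (T (v l)) (nth 0 s i).
have /eqP kerA_neq0 : kermx A != 0.
  rewrite kermx_eq0; apply/negP => /eqP rkA.
  by have := rank_leq_col A; rewrite rkA ltnn.
have [i c_neq0] : exists i, row i (kermx A) != 0.
  apply: contra_notP kerA_neq0 => hn; apply/row_matrixP => i; rewrite row0.
  by apply/eqP; apply: contra_notT hn => hi; exists i.
set c := row i (kermx A) in c_neq0.
have cA : c *m A = 0 by rewrite /c -row_mul mulmx_ker row0.
exists (\sum_(l < m.+1) c 0 l *: v l); split.
  apply/eqP => /(v_free (c 0)) c0; move/eqP: c_neq0; apply.
  by apply/rowP => l; rewrite [RHS]mxE c0.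
move=> b b_s; have b_lt : (index b s < m)%N by rewrite index_mem.
have := congr1 (fun M : 'M[R[i]]_(1, m) => M 0 (Ordinal b_lt)) cA; rewrite !mxE => <-.
by rewrite linear_op_sum ip_suml; apply: eq_bigr => l _; rewrite !mxE /= nth_index.
Qed.

End LinearOperator.

Section Isometry.
Variable T : H -> H.
Hypothesis isoT : Defs.isometry ip T.

Lemma isometry_ipxx x : ip (T x) (T x) = ip x x.
Proof. by rewrite !ipxx isoT.2. Qed.

Lemma isometry_ip x y : ip (T x) (T y) = ip x y.
Proof.
have linT := isoT.1.
have cross (a b c d w z : R[i]) : a + w + (c + b) = a + z + (d + b) -> w + c = z + d.
  by move=> h; transitivity (a + w + (c + b) - a - b); [ring | rewrite h; ring].
(* polarization: both identities come from expanding [|T v|^2 = |v|^2] *)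
apply: complex_eq_from_Re.
  have := isometry_ipxx (x + y); rewrite linear_opD //.
  rewrite !ipDl !ipDr !isometry_ipxx [ip (T y) (T x)]ipC [ip y x]ipC; exact: cross.
have := isometry_ipxx ('i *: x + y); rewrite linT.
rewrite !ipDl !ipDr !ipZl !ipZr !isometry_ipxx [ip (T y) (T x)]ipC [ip y x]ipC.
exact: cross.
Qed.

Lemma isometry_inj : injective T.
Proof.
move=> x y Txy; apply/eqP; rewrite -subr_eq0; apply/eqP; apply: hnorm_eq0.
by rewrite -isoT.2 linear_opB ?Txy ?subrr ?hnorm0 //; exact: isoT.1.
Qed.

Lemma surj_isometry_unitary : (forall x, exists y, T y = x) -> unitary ip T.
Proof.
move=> surjT; split; first exact: isoT.1.
pose S x := projT1 (cid (surjT x)).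
have TS x : T (S x) = x by exact: projT2 (cid (surjT x)).
exists S; split => [x y|x|//].
- by rewrite -{1}(TS y) isometry_ip.
- by apply: isometry_inj; rewrite TS.
Qed.

Lemma isometry_range_closed : complete_space ip -> forall x,
  (forall e, 0 < e -> exists y, hnorm ip (x - T y) < e) -> exists y, T y = x.
Proof.
move=> complH x approx.
pose ys m := projT1 (cid (approx _ (invSn_gt0 R m))).
have x_ys m : hnorm ip (x - T (ys m)) < m.+1%:R^-1 := projT2 (cid (approx _ (invSn_gt0 R m))).
have x_ys_small e : 0 < e -> exists N, forall n, (N <= n)%N -> hnorm ip (x - T (ys n)) < e.
  move=> /exists_invSn_lt [N ltN]; exists N => n leNn.
  exact: lt_le_trans (x_ys n) (le_trans (lef_invSn _ leNn) (ltW ltN)).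
have [l ys_l] : exists l, forall e, 0 < e ->
    exists N, forall n, (N <= n)%N -> hnorm ip (ys n - l) < e.
  apply: complH => e e0; have /x_ys_small [N hN] : 0 < e / 2 by rewrite divr_gt0.
  exists N => m n /hN xm /hN xn; rewrite -isoT.2 linear_opB; last exact: isoT.1.
  apply: le_lt_trans (hnorm_distD _ x _) _.
  by rewrite hnorm_distC [e]splitr ltrD.
exists l; apply/eqP; rewrite -subr_eq0; apply/eqP; apply: hnorm_eq0_lt.
move=> e e0; have e2 : 0 < e / 2 by rewrite divr_gt0.
have [N1 hN1] := ys_l _ e2.
have [N2 hN2] := x_ys_small _ e2; set n := maxn N1 N2.
apply: le_lt_trans (hnorm_distD _ (T (ys n)) _) _.
rewrite -linear_opB; last exact: isoT.1.
rewrite isoT.2 hnorm_distC [hnorm ip (T _ - x)]hnorm_distC [e]splitr.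
by rewrite ltrD ?hN1 ?hN2 ?leq_maxl ?leq_maxr.
Qed.

End Isometry.

Definition reflection (w v : H) := v - (2 * ip v w / ip w w) *: w.

Lemma reflection_linear w : linear_op (reflection w).
Proof.
move=> a x y; rewrite /reflection ipDl ipZl.
have -> : 2 * (a * ip x w + ip y w) / ip w w =
  a * (2 * ip x w / ip w w) + 2 * ip y w / ip w w by ring.
by rewrite scalerDl scalerBr scalerA opprD addrACA.
Qed.

Lemma reflection_id w v : ip v w = 0 -> reflection w v = v.
Proof. by move=> h; rewrite /reflection h mulr0 mul0r scale0r subr0. Qed.

Lemma reflection_ipxx w v : ip w w != 0 -> ip (reflection w v) (reflection w v) = ip v v.
Proof.
move=> w_neq0; have conj_ww : Num.conj (ip w w) = ip w w by rewrite ipxx conjC_real.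
rewrite /reflection !ipBl !ipBr !ipZl !ipZr [ip w v]ipC !rmorphM /= fmorphV /=.
by rewrite conj_ww rmorph_nat; field.
Qed.

Lemma reflection_isometry T w : ip w w != 0 -> Defs.isometry ip T ->
  Defs.isometry ip (reflection w \o T).
Proof.
move=> w_neq0 [linT isoT]; split=> [a x y|x] /=.
  by rewrite linT reflection_linear.
by rewrite /hnorm reflection_ipxx // -/(hnorm _ _) isoT.
Qed.

Section Swap.
Variables u r : H.
Hypotheses (uu_rr : ip u u = ip r r) (u_orth_r : ip u r = 0) (u_neq0 : ip u u != 0).

Lemma ip_swap_vector : ip (u - r) (u - r) = 2 * ip u u.
Proof. by rewrite !ipBl !ipBr [ip r u]ipC u_orth_r -uu_rr rmorph0; ring. Qed.

Lemma reflection_swap : reflection (u - r) u = r.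
Proof.
rewrite /reflection ip_swap_vector ipBr u_orth_r subr0 divff.
  by rewrite scale1r opprB addrC subrK.
by rewrite mulf_neq0 // pnatr_eq0.
Qed.

End Swap.

Lemma isometry_extend_range (T : H -> H) (isoT : Defs.isometry ip T) n (y : 'I_n -> H) x :
  infinite_dimensional H ->
  exists S, [/\ Defs.isometry ip S, forall i, S (y i) = T (y i) & exists z, S z = x].
Proof.
move=> infH; have linT := isoT.1.
set s := [seq T (y i) | i <- enum 'I_n].
pose M v := exists q, v = T q.
have M0 : M 0 by exists 0; rewrite linear_op0.
have Mlin a u v : M u -> M v -> M (a *: u + v).
  by move=> [q1 ->] [q2 ->]; exists (a *: q1 + q2); rewrite linT.
have Ms a : a \in s -> M a by move=> /mapP [i _ ->]; exists (y i).
have [_ [[q0 ->] Tq0_span x_Tq0]] := orth_projection M0 Mlin Ms x.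
set r := x - T q0.
have [r0|r_neq0] := eqVneq r 0.
  by exists T; split => //; exists q0; apply/eqP; rewrite eq_sym -subr_eq0 -/r r0.
have [z0 [z0_neq0 z0_orth]] := exists_image_orth linT infH (r :: s).
have /negP z0n_neq0 : hnorm ip z0 != 0 by apply: contra z0_neq0 => /eqP/hnorm_eq0 ->.
have rn_neq0 : hnorm ip r != 0 by apply: contra r_neq0 => /eqP/hnorm_eq0 ->.
set u := (hnorm ip r / hnorm ip z0)%:C *: T z0.
have u_norm : hnorm ip u = hnorm ip r.
  by rewrite hnormZ_real isoT.2 ger0_norm ?divfK ?divr_ge0 ?hnorm_ge0 //; apply/negP.
have u_s b : b \in s -> ip u b = 0 by move=> b_s; rewrite ipZl z0_orth ?mulr0 // inE b_s orbT.
have u_orth_r : ip u r = 0 by rewrite ipZl z0_orth ?mulr0 ?mem_head.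
have uu_rr : ip u u = ip r r by rewrite !ipxx u_norm.
have u_neq0 : ip u u != 0.
  by rewrite ipxx u_norm; apply: contra rn_neq0 => /eqP [] /eqP; rewrite sqrf_eq0.
have w_neq0 : ip (u - r) (u - r) != 0.
  by rewrite ip_swap_vector // mulf_neq0 // pnatr_eq0.
exists (reflection (u - r) \o T); split.
- exact: reflection_isometry.
- move=> i /=; apply: reflection_id.
  have Tyi_s : T (y i) \in s by apply: map_f; rewrite mem_enum.
  by rewrite ipBr ipC u_s // (ipC r) x_Tq0 // rmorph0 subrr.
exists (q0 + (hnorm ip r / hnorm ip z0)%:C *: z0) => /=.
rewrite linear_opD // linear_opZ // -/u linear_opD; last exact: reflection_linear.
rewrite reflection_swap // reflection_id; first by rewrite /r addrC subrK.
by rewrite ipBr ipC (Tq0_span u u_s) (ipC r) (Tq0_span r x_Tq0) rmorph0 subrr.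
Qed.

End InnerProduct.

Section NowhereDense.
Variables (R : realType) (H : lmodType R[i]) (ip : H -> H -> R[i]).

Lemma nowhere_dense_set0 (X : set (H -> H)) : nowhere_dense_in ip X set0.
Proof.
split=> //; apply/seteqP; split=> // T [U [oU sU UT]].
by have [_ /(_ U oU UT) [S []]] := sU T UT.
Qed.

Hypothesis hip : inner_product ip.
Variable d : nat -> H.

Definition far_isometries (j k : nat) : set (H -> H) :=
  [set T | [/\ Defs.isometry ip T, ~ unitary ip T &
     forall y, k.+1%:R^-1 <= hnorm ip (d j - T y)]].

Lemma far_isometries_nowhere_dense j k : infinite_dimensional H ->
  nowhere_dense_in ip (isometries ip) (far_isometries j k).
Proof.
move=> infH; split=> [T []//|]; apply/seteqP; split=> // T [U [[sUI U_open] sU UT]].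
have [n [y [e [e0 nbhdU]]]] := U_open T UT.
have [S [isoS Sy [z Sz]]] := isometry_extend_range hip (sUI _ UT) y (d j) infH.
have [_ S_adh] : closure_in ip (isometries ip) (far_isometries j k) S.
  by apply/sU/nbhdU => // i; rewrite Sy subrr (hnorm0 hip).
pose V := [set Q | Defs.isometry ip Q /\ hnorm ip (Q z - S z) < k.+1%:R^-1].
have V_open : sot_open_in ip (isometries ip) V.
  split=> [Q []//|Q [isoQ ltQ]].
  exists 1%N, (fun=> z), (k.+1%:R^-1 - hnorm ip (Q z - S z)); split; first by rewrite subr_gt0.
  move=> Q' isoQ' /(_ ord0); rewrite ltrBrDr => ltQ'; split=> //.
  exact: le_lt_trans (hnorm_distD hip _ (Q z) _) ltQ'.
have [|Q [[_ ltQ] [_ _ farQ]]] := S_adh V V_open.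
  by split=> //; rewrite subrr (hnorm0 hip) invSn_gt0.
by have := farQ z; rewrite -Sz hnorm_distC // leNgt ltQ.
Qed.

Lemma far_isometries_cover T : complete_space ip ->
  (forall (x : H) (e : R), 0 < e -> exists j, hnorm ip (x - d j) < e) ->
  Defs.isometry ip T -> ~ unitary ip T -> exists j k, far_isometries j k T.
Proof.
move=> complH d_dense isoT nuT.
suff [j [k farT]] : exists j k, forall y, k.+1%:R^-1 <= hnorm ip (d j - T y).
  by exists j, k.
apply: contrapT => near; apply/nuT/(surj_isometry_unitary hip isoT) => x.
apply: (isometry_range_closed hip isoT complH) => e e0.
have e2 : 0 < e / 2 by rewrite divr_gt0.
have [k ltk] := exists_invSn_lt e2; have [j ltj] := d_dense x _ e2.
have [y lty] : exists y, hnorm ip (d j - T y) < k.+1%:R^-1.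
  apply: contrapT => far; apply: near; exists j, k => y.
  by rewrite leNgt; apply/negP => lty; apply: far; exists y.
exists y; apply: le_lt_trans (hnorm_distD hip _ (d j) _) _.
by rewrite [e]splitr ltrD // (lt_trans lty).
Qed.

End NowhereDense.

Theorem mainTheorem1 (R : realType) (H : lmodType R[i]) (ip : H -> H -> R[i])
  (hH : hilbert_space ip) (hsep : separable_space ip)
  (hinf : infinite_dimensional H) :
  residual_in ip (isometries ip) (isometries ip `&` unitaries ip).
Proof.
have [[hip complH] [d d_dense]] := (hH, hsep).
split=> [T []//|].
pose N n : set (H -> H) :=
  if (unpickle n : option (nat * nat)) is Some (j, k) then far_isometries ip d j k else set0.
exists N; split=> [n|].
  rewrite /N; case: unpickle => [[j k]|]; last exact: nowhere_dense_set0.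
  exact: far_isometries_nowhere_dense.
apply/seteqP; split=> [T [isoT nuT]|T [n _]].
  have [j [k farT]] := far_isometries_cover hip complH d_dense isoT (fun uT => nuT (conj isoT uT)).
  by exists (pickle (j, k)) => //; rewrite /N pickleK.
by rewrite /N; case: unpickle => [[j k] [isoT nuT _]|//]; split=> // -[].
Qed.
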